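(* For every $k \ge 3$, the space $\mathrm{Conf}_2(B_k)$ is homotopy equivalent to a connected graph whose first Betti number is at least $k-1$.
   Context: The banana graph $B_k$ is the graph with two vertices connected by $k$ edges. $\mathrm{Conf}_n(X)=\{(x_1,\dots,x_n)\in X^n : x_i\neq x_j \text{ for } i\neq j\}$. *)

From HB Require Import structures.
From mathcomp Require Import all_boot all_order all_algebra.
From mathcomp Require Import all_classical all_reals all_analysis.

Import Order.TTheory GRing.Theory Num.Theory.
Import numFieldNormedType.Exports.
Local Open Scope classical_set_scope.
Local Open Scope ring_scope.

Record multigraph := FGraph {
  nv : nat;
  ne : nat;
  gsrc : 'I_ne -> 'I_nv;
  gtgt : 'I_ne -> 'I_nv }.

Definition banana (k : nat) : multigraph :=
  FGraph 2 k (fun _ => ord0) (fun _ => ord_max).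

Definition gadj (G : multigraph) : rel 'I_(nv G) :=
  fun u v => [exists e : 'I_(ne G),
     ((gsrc G e == u) && (gtgt G e == v)) || ((gsrc G e == v) && (gtgt G e == u))].

Definition gconnected (G : multigraph) : Prop :=
  (0 < nv G)%N /\ forall u v : 'I_(nv G), connect (gadj G) u v.

Definition ncomp (G : multigraph) : nat := n_comp (gadj G) predT.

Definition betti1 (G : multigraph) : nat := (ne G + ncomp G - nv G)%N.

(* Geometric realization of a finite graph, as a subset of the Euclidean
   space R^nv x R^ne x R^ne.  Distinct edges only
   meet at common endpoints, and each arc (also a loop) is embedded, so this
   compact set is homeomorphic to the usual CW realization of G. *)
Notation ambient R G :=
  ('rV[R]_(nv G) * 'rV[R]_(ne G) * 'rV[R]_(ne G))%type.

Definition delta (R : realType) (n : nat) (i : 'I_n) : 'rV[R]_n :=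
  \row_j (j == i)%:R.

Definition vertex_pt (R : realType) (G : multigraph) (v : 'I_(nv G))
  : ambient R G := (delta R (nv G) v, 0, 0).

Definition edge_pt (R : realType) (G : multigraph) (e : 'I_(ne G)) (t : R)
  : ambient R G :=
  ((1 - t) *: delta R (nv G) (gsrc G e) + t *: delta R (nv G) (gtgt G e),
   (t * (1 - t)) *: delta R (ne G) e,
   (t * (1 - t) * (1 - 2 * t)) *: delta R (ne G) e).

Definition realization (R : realType) (G : multigraph) : set (ambient R G) :=
  [set x | (exists v, x = vertex_pt R G v) \/
           (exists e, exists2 t, `[0, 1]%classic t & x = edge_pt R G e t)].

Definition Conf2 (T : Type) (X : set T) : set (T * T) :=
  [set p | X p.1 /\ X p.2 /\ p.1 <> p.2].

Definition homotopic_on (R : realType) (S T : topologicalType)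
    (A : set S) (B : set T) (f g : S -> T) : Prop :=
  exists H : R * S -> T,
    {within `[0, 1]%classic `*` A, continuous H} /\
    (forall x, A x -> H (0, x) = f x /\ H (1, x) = g x) /\
    (forall t x, `[0, 1]%classic t -> A x -> B (H (t, x))).

Definition homotopy_equivalent (R : realType) (S T : topologicalType)
    (A : set S) (B : set T) : Prop :=
  exists (f : S -> T) (g : T -> S),
    {within A, continuous f} /\ {within B, continuous g} /\
    (forall x, A x -> B (f x)) /\ (forall y, B y -> A (g y)) /\
    homotopic_on R S S A A (g \o f) id /\ homotopic_on R T T B B (f \o g) id.

(* A point of B_k is a parameter s in [0, 1] on one of its k edges, s = 0 and
   s = 1 being the two vertices.  Conf_2(B_k) deformation retracts onto the
   graph whose vertices are the configurations (v0, v1) and (v1, v0) and whose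
   edges, one for each ordered pair (i, j) of distinct edges of B_k, are the
   paths t |-> (point t of edge i, point 1 - t of edge j); this graph is
   B_{k(k-1)}, connected with first Betti number k(k-1) - 1 >= k - 1.
   The retraction sends points with parameters s, t to the point [tau] of the
   edge (i, j), where tau = 1/2 + (s - t) / (2 (|s - t| + spread)) and [spread]
   is positive exactly when both points are interior to distinct edges.  The
   homotopy interpolates linearly between (s, t) and (tau, 1 - tau).  Every
   quantity is read off the coordinates of the ambient space, so continuity
   reduces to composing continuous functions. *)
From HB Require Import structures.
From mathcomp Require Import all_boot all_order all_algebra.
From mathcomp Require Import all_classical all_reals all_analysis.
From mathcomp Require Import ring lra zify.
Import Order.TTheory GRing.Theory Num.Theory.
Import numFieldNormedType.Exports.
Local Open Scope classical_set_scope.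
Local Open Scope ring_scope.

Section RealPreliminaries.
Context {R : realType}.

Lemma cvg_row {T : Type} (F : set_system T) {FF : Filter F} n
    (h : T -> 'I_n -> R) (a : 'I_n -> R) :
  (forall j, h^~ j @ F --> a j) ->
  (fun x => \row_j h x j : 'rV[R]_n) @ F --> \row_j a j.
Proof.
move=> ha.
have rowE (b : 'I_n -> R) : \row_j b j = \sum_j b j *: delta_mx 0 j.
  by rewrite {1}[\row_j b j]row_sum_delta; apply: eq_bigr => j _; rewrite mxE.
rewrite rowE; under eq_fun do rewrite rowE.
apply: cvg_big; first exact: add_continuous.
by move=> j _; apply: cvgZ; [exact: ha | exact: cvg_cst].
Qed.

Lemma cvg0_mulr_bounded {T : Type} (F : set_system T) {FF : Filter F}
    (c v : T -> R) :
  c @ F --> 0 -> (forall x, `|v x| <= 1) -> (fun x => c x * v x) @ F --> 0.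
Proof.
move=> c0 v1; apply/cvgr0Pnorm_le => e e0.
move/cvgr0Pnorm_le : c0 => /(_ e e0); apply: filterS => x cx.
by rewrite normrM; apply: le_trans cx; rewrite -[leRHS]mulr1 ler_wpM2l.
Qed.

Lemma sumr_indicator n (F : 'I_n -> R) (i : 'I_n) : \sum_l F l * (l == i)%:R = F i.
Proof.
rewrite (bigD1 i) //= eqxx mulr1 big1 ?addr0 // => l /negbTE ->.
by rewrite mulr0.
Qed.

Lemma min1_continuous : continuous (fun x : R => Num.min x 1).
Proof. by move=> x; apply: continuous_min; [exact: cvg_id | exact: cvg_cst]. Qed.

Lemma oneD_norm_neq0 (x : R) : 1 + `|x| != 0.
Proof. by rewrite gt_eqF // ltr_pwDr. Qed.

Lemma itv01_onem {x : R} : 0 <= x <= 1 -> 0 <= 1 - x <= 1.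
Proof. by move=> /andP [x0 x1]; apply/andP; split; lra. Qed.

Lemma convex_itv01 {l a b : R} : 0 <= l <= 1 -> 0 <= a <= 1 -> 0 <= b <= 1 ->
  0 <= l * a + (1 - l) * b <= 1.
Proof.
move=> /andP [l0 l1] /andP [a0 a1] /andP [b0 b1].
have : l * a <= l by rewrite ler_piMr.
have : (1 - l) * b <= 1 - l by rewrite ler_piMr ?subr_ge0.
have : 0 <= l * a by rewrite mulr_ge0.
have : 0 <= (1 - l) * b by rewrite mulr_ge0 ?subr_ge0.
by move=> *; apply/andP; split; lra.
Qed.

Lemma convex_itvoo01 {l a b : R} : 0 <= l <= 1 -> 0 < a < 1 -> 0 < b < 1 ->
  0 < l * a + (1 - l) * b < 1.
Proof.
move=> /andP [l0 l1] /andP [a0 a1] /andP [b0 b1].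
have : 0 <= l * a by rewrite mulr_ge0 // ltW.
have : 0 <= (1 - l) * b by rewrite mulr_ge0 ?subr_ge0 // ltW.
have : (1 - l) * b <= 1 - l by rewrite ler_piMr ?subr_ge0 // ltW.
have [->|l_neq0] := eqVneq l 0; first by rewrite mul0r add0r subr0 mul1r b0 b1.
have l_gt0 : 0 < l by rewrite lt_neqAle eq_sym l_neq0.
have : 0 < l * a by rewrite mulr_gt0.
have : l * a < l by rewrite gtr_pMr.
by move=> *; apply/andP; split; lra.
Qed.

End RealPreliminaries.

Section Banana.
Variables (R : realType) (n : nat).
Hypothesis n_gt0 : (0 < n)%N.

Lemma banana_vertex (v : 'I_(nv (banana n))) : v = ord0 \/ v = ord_max.
Proof. by case: v => [[|[|//]] ?]; [left | right]; apply: val_inj. Qed.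

Lemma banana_realizationP x : realization R (banana n) x ->
  exists e t, 0 <= t <= 1 /\ x = edge_pt R (banana n) e t.
Proof.
pose e0 : 'I_n := Ordinal n_gt0.
case=> [[v ->]|[e [t t01 ->]]]; last by exists e, t; rewrite /= in_itv in t01.
have [->|->] := banana_vertex v.
- exists e0, 0; rewrite lexx ler01; split=> //.
  by rewrite /vertex_pt /edge_pt /= subr0 scale1r scale0r addr0 !mul0r !scale0r.
- exists e0, 1; rewrite lexx ler01; split=> //.
  by rewrite /vertex_pt /edge_pt /= subrr scale0r scale1r add0r !mulr0 !mul0r !scale0r.
Qed.

Lemma edge_pt_realization e t : 0 <= t <= 1 ->
  realization R (banana n) (edge_pt R (banana n) e t).
Proof. by move=> t01; right; exists e; exists t; rewrite //= in_itv. Qed.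

Lemma banana_connected : gconnected (banana n).
Proof.
split=> // u v; pose e0 : 'I_n := Ordinal n_gt0.
have a01 : gadj (banana n) ord0 ord_max by apply/existsP; exists e0; rewrite !eqxx.
have a10 : gadj (banana n) ord_max ord0.
  by apply/existsP; exists e0; rewrite !eqxx orbT.
by have [->|->] := banana_vertex u; have [->|->] := banana_vertex v;
  rewrite ?connect0 // connect1.
Qed.

End Banana.

Lemma betti1_banana_ge n : (n - 2 <= betti1 (banana n))%N.
Proof. by rewrite /betti1 /=; lia. Qed.

Section BananaConfigurations.
Variables (R : realType) (k : nat).
Hypothesis k_ge3 : (3 <= k)%N.

Local Notation Pt := ('rV[R]_2 * 'rV[R]_k * 'rV[R]_k)%type.
Local Notation Pt2 := (Pt * Pt)%type.
Local Notation Ek := (edge_pt R (banana k)).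

Definition vpar (x : Pt) : R := x.1.1 0 ord_max.
Definition bump (x : Pt) (i : 'I_k) : R := x.1.2 0 i.

Definition apartness (p : Pt2) : R :=
  vpar p.1 * (1 - vpar p.1) * (vpar p.2 * (1 - vpar p.2))
  - \sum_i bump p.1 i * bump p.2 i.
Definition gap (p : Pt2) : R := vpar p.1 - vpar p.2.
Definition spread (p : Pt2) : R := 4 * Num.sqrt (apartness p) / (1 + `|gap p|).
Definition sep (p : Pt2) : R := `|gap p| + spread p.
Definition tau (p : Pt2) : R := 2^-1 + gap p / (2 * sep p).

Lemma vpar_continuous : continuous vpar.
Proof.
move=> x; apply: (@continuous_comp _ _ _ (fun x : Pt => x.1.1) (fun M => M 0 ord_max)).
- by apply: (@continuous_comp _ _ _ fst fst); [exact: cvg_fst | exact: cvg_fst].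
- exact: coord_continuous.
Qed.

Lemma bump_continuous i : continuous (bump^~ i).
Proof.
move=> x; apply: (@continuous_comp _ _ _ (fun x : Pt => x.1.2) (fun M => M 0 i)).
- by apply: (@continuous_comp _ _ _ fst snd); [exact: cvg_fst | exact: cvg_snd].
- exact: coord_continuous.
Qed.

Section ContinuityAt.
Variable p0 : Pt2.
Local Notation F := (nbhs p0).

Let cvg_vpar1 : (fun p : Pt2 => vpar p.1) @ F --> vpar p0.1.
Proof. by apply: (continuous_cvg _ (vpar_continuous _)); exact: cvg_fst. Qed.
Let cvg_vpar2 : (fun p : Pt2 => vpar p.2) @ F --> vpar p0.2.
Proof. by apply: (continuous_cvg _ (vpar_continuous _)); exact: cvg_snd. Qed.
Let cvg_bump1 i : (fun p : Pt2 => bump p.1 i) @ F --> bump p0.1 i.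
Proof. by apply: (continuous_cvg _ (bump_continuous i _)); exact: cvg_fst. Qed.
Let cvg_bump2 i : (fun p : Pt2 => bump p.2 i) @ F --> bump p0.2 i.
Proof. by apply: (continuous_cvg _ (bump_continuous i _)); exact: cvg_snd. Qed.

Local Ltac cvg_arith := repeat first
  [ exact: cvg_vpar1 | exact: cvg_vpar2 | exact: cvg_bump1 | exact: cvg_bump2
  | exact: cvg_cst | apply: cvgD | apply: cvgB | apply: cvgM | apply: cvgN ].

Lemma apartness_continuous_at : apartness @ F --> apartness p0.
Proof.
apply: cvgB; first by cvg_arith.
by apply: cvg_big => [|i _]; [exact: add_continuous | cvg_arith].
Qed.

Lemma gap_continuous_at : gap @ F --> gap p0.
Proof. by rewrite /gap; cvg_arith. Qed.

Let cvg_norm_gap : (fun p => `|gap p|) @ F --> `|gap p0|.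
Proof. by apply: cvg_norm; exact: gap_continuous_at. Qed.

Lemma spread_continuous_at : spread @ F --> spread p0.
Proof.
apply: cvgM.
- apply: cvgM; first exact: cvg_cst.
  exact: (continuous_cvg _ (@sqrt_continuous R _) apartness_continuous_at).
- apply: cvgV; first exact: oneD_norm_neq0.
  by apply: cvgD; [exact: cvg_cst | exact: cvg_norm_gap].
Qed.

Lemma sep_continuous_at : sep @ F --> sep p0.
Proof. by apply: cvgD; [exact: cvg_norm_gap | exact: spread_continuous_at]. Qed.

Lemma tau_continuous_at : sep p0 != 0 -> tau @ F --> tau p0.
Proof.
move=> sep0; apply: cvgD; first exact: cvg_cst.
apply: cvgM; first exact: gap_continuous_at.
apply: cvgV; first by rewrite mulf_neq0.
by apply: cvgM; [exact: cvg_cst | exact: sep_continuous_at].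
Qed.

End ContinuityAt.

Definition dpair := {ij : 'I_k * 'I_k | ij.1 != ij.2}.
Definition npairs := #|{: dpair}|.
Definition pfst (e : 'I_npairs) : 'I_k := (val (enum_val e : dpair)).1.
Definition psnd (e : 'I_npairs) : 'I_k := (val (enum_val e : dpair)).2.

Local Notation Qt := ('rV[R]_2 * 'rV[R]_npairs * 'rV[R]_npairs)%type.
Local Notation Em := (edge_pt R (banana npairs)).

Definition seg (x : R) : 'rV[R]_2 := (1 - x) *: delta R 2 ord0 + x *: delta R 2 ord_max.

(* On a configuration with its points on distinct edges i and j, [tweight p e]
   is [tau p * (1 - tau p)] for the edge e = (i, j) and 0 for the others. *)
Definition tweight (p : Pt2) (e : 'I_npairs) : R :=
  Num.sqrt (bump p.1 (pfst e)) * Num.sqrt (bump p.2 (psnd e))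
  * (spread p + 2 * `|gap p|) / ((1 + `|gap p|) * sep p ^+ 2).

Definition retraction (p : Pt2) : Qt :=
  (seg (tau p), \row_e tweight p e, \row_e (tweight p e * (1 - 2 * tau p))).

(* The point [t] of the edge e = (i, j) is the configuration of the point [t]
   of edge i and the point [1 - t] of edge j; the last coordinate of
   [edge_pt] is odd under [t |-> 1 - t], whence the sign. *)
Definition incl (q : Qt) : Pt2 :=
  ((q.1.1, \row_i \sum_e ((pfst e == i)%:R * q.1.2 0 e),
           \row_i \sum_e ((pfst e == i)%:R * q.2 0 e)),
   (seg (q.1.1 0 ord0), \row_j \sum_e ((psnd e == j)%:R * q.1.2 0 e),
           \row_j - \sum_e ((psnd e == j)%:R * q.2 0 e))).

Lemma cvg_seg {T : Type} (F : set_system T) {FF : Filter F} (h : T -> R) a :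
  h @ F --> a -> (fun x => seg (h x)) @ F --> seg a.
Proof.
move=> ha; apply: cvgD; apply: cvgZ => //; try exact: cvg_cst.
by apply: cvgB => //; exact: cvg_cst.
Qed.

Lemma retraction_continuous_at p : sep p != 0 -> {for p, continuous retraction}.
Proof.
move=> sep0; have ctau := tau_continuous_at p sep0.
have cgap := cvg_norm (gap_continuous_at p).
have ctweight e : (fun p => tweight p e) @ nbhs p --> tweight p e.
  apply: cvgM; last first.
    apply: cvgV; first by rewrite mulf_neq0 ?oneD_norm_neq0 ?expf_neq0.
    apply: cvgM; first by apply: cvgD; [exact: cvg_cst | exact: cgap].
    by rewrite expr2; apply: cvgM; exact: sep_continuous_at.
  apply: cvgM; last first.
    apply: cvgD; first exact: spread_continuous_at.
    by apply: cvgM; [exact: cvg_cst | exact: cgap].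
  by apply: cvgM; apply: (continuous_cvg _ (@sqrt_continuous R _));
    apply: (continuous_cvg _ (bump_continuous _ _)); [exact: cvg_fst | exact: cvg_snd].
apply: (@cvg_pair _ _ _ _ (nbhs _) (nbhs _)).
  apply: (@cvg_pair _ _ _ _ (nbhs _) (nbhs _)); first exact: cvg_seg.
  exact: cvg_row.
apply: cvg_row => e; apply: cvgM => //.
by apply: cvgB; [exact: cvg_cst | apply: cvgM; [exact: cvg_cst | exact: ctau]].
Qed.

Lemma incl_continuous : continuous incl.
Proof.
move=> q; pose cq (f : Qt -> R) := f @ nbhs q --> f q.
have c10 : cq (fun q => q.1.1 0 ord0).
  apply: (continuous_cvg _ (@coord_continuous _ _ _ _ _ _)).
  by apply: (@continuous_comp _ _ _ fst fst); [exact: cvg_fst | exact: cvg_fst].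
have c12 e : cq (fun q => q.1.2 0 e).
  apply: (continuous_cvg _ (@coord_continuous _ _ _ _ _ _)).
  by apply: (@continuous_comp _ _ _ fst snd); [exact: cvg_fst | exact: cvg_snd].
have c2 e : cq (fun q => q.2 0 e).
  by apply: (continuous_cvg _ (@coord_continuous _ _ _ _ _ _)); exact: cvg_snd.
have csum (d : 'I_npairs -> 'I_k) (i : 'I_k) (f : 'I_npairs -> Qt -> R) :
    (forall e, cq (f e)) -> cq (fun q => \sum_e ((d e == i)%:R * f e q)).
  move=> cf; apply: cvg_big => [|e _]; first exact: add_continuous.
  by apply: cvgM; [exact: cvg_cst | exact: cf].
have c1 : (fun q : Qt => q.1.1) @ nbhs q --> q.1.1.
  by apply: (@continuous_comp _ _ _ fst fst); [exact: cvg_fst | exact: cvg_fst].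
apply: (@cvg_pair _ _ _ _ (nbhs _) (nbhs _));
  (apply: (@cvg_pair _ _ _ _ (nbhs _) (nbhs _));
    first apply: (@cvg_pair _ _ _ _ (nbhs _) (nbhs _))).
- exact: c1.
- by apply: cvg_row => i; apply: csum.
- by apply: cvg_row => i; apply: csum.
- exact: cvg_seg.
- by apply: cvg_row => i; apply: csum.
- by apply: cvg_row => i; apply: cvgN; apply: csum.
Qed.

Lemma seg_ord_max x : seg x 0 ord_max = x.
Proof. by rewrite !mxE /= mulr0 mulr1 add0r. Qed.

Lemma seg_ord0 x : seg x 0 ord0 = 1 - x.
Proof. by rewrite !mxE /= mulr0 mulr1 addr0. Qed.

Lemma vpar_Ek i s : vpar (Ek i s) = s.
Proof. exact: seg_ord_max. Qed.

Lemma bump_Ek i s l : bump (Ek i s) l = s * (1 - s) * (l == i)%:R.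
Proof. by rewrite /bump /edge_pt /= !mxE. Qed.

Lemma gap_Ek i j s t : gap (Ek i s, Ek j t) = s - t.
Proof. by rewrite /gap !vpar_Ek. Qed.

Lemma eq_Ek i j s t : Ek i s = Ek j t -> s = t /\ (s * (1 - s) = 0 \/ i = j).
Proof.
move=> st; have ts : t = s by rewrite -(vpar_Ek j t) -st vpar_Ek.
split=> //; subst t; have := congr1 (bump^~ i) st; rewrite !bump_Ek eqxx mulr1.
by case: eqVneq => [->|_]; [right | rewrite mulr0; left].
Qed.

Lemma Ek_vertex i j s : s * (1 - s) = 0 -> Ek i s = Ek j s.
Proof.
move=> s_vertex; rewrite /edge_pt /= s_vertex; congr (_, _, _).
- by rewrite !scale0r.
- by rewrite !mul0r !scale0r.
Qed.

Lemma vertex01 {s : R} : s * (1 - s) = 0 -> s = 0 \/ s = 1.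
Proof.
by move/eqP; rewrite mulf_eq0 subr_eq0 => /orP [/eqP ->|/eqP <-]; [left | right].
Qed.

Lemma apartness_Ek i j s t :
  apartness (Ek i s, Ek j t) = s * (1 - s) * (t * (1 - t)) * (1 - (i == j)%:R).
Proof.
rewrite /apartness !vpar_Ek /=; under eq_bigr do rewrite !bump_Ek.
under eq_bigr do rewrite mulrAC.
by rewrite sumr_indicator; ring.
Qed.

Lemma spread_ge0 p : 0 <= spread p.
Proof. by rewrite divr_ge0 ?mulr_ge0 ?sqrtr_ge0 ?addr_ge0. Qed.

Lemma norm_gap_le_sep p : `|gap p| <= sep p.
Proof. by rewrite lerDl spread_ge0. Qed.

Lemma sep_gt0 p : sep p != 0 -> 0 < sep p.
Proof.
by move=> sep0; rewrite lt_neqAle eq_sym sep0 (le_trans _ (norm_gap_le_sep p)).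
Qed.

Lemma tau_mul_subr p : sep p != 0 ->
  tau p * (1 - tau p) = spread p * (spread p + 2 * `|gap p|) / (4 * sep p ^+ 2).
Proof.
move=> sep0; have gap2 : gap p ^+ 2 = `|gap p| ^+ 2 by rewrite real_normK ?num_real.
move: sep0; rewrite /tau /sep => sep0.
transitivity (((`|gap p| + spread p) ^+ 2 - gap p ^+ 2) / (4 * (`|gap p| + spread p) ^+ 2)).
  by field.
by rewrite gap2; field.
Qed.

Lemma tau_itv p : sep p != 0 -> 0 <= tau p <= 1.
Proof.
move=> /sep_gt0 sep_pos; have gap_le := norm_gap_le_sep p.
have : `|gap p / (2 * sep p)| <= 2^-1.
  have sep2_pos : 0 < 2 * sep p by rewrite mulr_gt0.
  by rewrite normrM normfV (gtr0_norm sep2_pos) ler_pdivrMr //; lra.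
by rewrite /tau => /ler_normlP [? ?]; apply/andP; split; lra.
Qed.

Lemma tau_spread0 p : sep p != 0 -> spread p = 0 ->
  vpar p.1 != vpar p.2 /\ tau p = if vpar p.2 < vpar p.1 then 1 else 0.
Proof.
rewrite /tau /sep /gap => + spread0; rewrite spread0 !addr0 normr_eq0 subr_eq0 => st.
split=> //; case: ltgtP st => // [lt_ts|lt_st] _.
- by rewrite gtr0_norm ?subr_gt0 //; field; rewrite subr_eq0 gt_eqF.
- by rewrite ltr0_norm ?subr_lt0 //; field; rewrite subr_eq0 lt_eqF.
Qed.

Lemma sep_neq0 {i j s t} : Ek i s <> Ek j t -> sep (Ek i s, Ek j t) != 0.
Proof.
move=> st; apply/negP => /eqP sep0.
have gap_nneg := normr_ge0 (gap (Ek i s, Ek j t)).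
have spread_nneg := spread_ge0 (Ek i s, Ek j t).
move: sep0; rewrite /sep => sep0.
have /eqP : `|gap (Ek i s, Ek j t)| = 0 by lra.
rewrite normr_eq0 gap_Ek subr_eq0 => /eqP ts; subst t.
have /eqP : spread (Ek i s, Ek j s) = 0 by lra.
rewrite mulf_eq0 invr_eq0 (negbTE (oneD_norm_neq0 _)) orbF mulf_eq0 sqrtr_eq0.
rewrite apartness_Ek pnatr_eq0 /=; case: eqVneq => [ij|_]; first by subst j.
rewrite subr0 mulr1 -expr2 => s_vertex; apply: st; apply: Ek_vertex.
by apply/eqP; rewrite -sqrf_eq0 eq_le sqr_ge0 andbT.
Qed.

Lemma pfst_neq_psnd e : pfst e != psnd e.
Proof. by rewrite /pfst /psnd; case: (enum_val e). Qed.

Lemma dpair_surj {i j} : i != j -> exists e, pfst e = i /\ psnd e = j.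
Proof.
by move=> ij; exists (enum_rank (exist _ (i, j) ij : dpair)); rewrite /pfst /psnd enum_rankK.
Qed.

Lemma dpair_inj {e e'} : pfst e = pfst e' -> psnd e = psnd e' -> e = e'.
Proof.
move=> e1 e2; apply: enum_val_inj; apply: val_inj; move: e1 e2; rewrite /pfst /psnd.
by case: (val (enum_val e)) => a b; case: (val (enum_val e')) => c d /= -> ->.
Qed.

Lemma npairs_ge : (k + 1 <= npairs)%N.
Proof.
rewrite /npairs card_sig.
have := cardC [pred ij : 'I_k * 'I_k | ij.1 == ij.2].
rewrite card_prod card_ord.
have diag_le : (#|[pred ij : 'I_k * 'I_k | ij.1 == ij.2]| <= k)%N.
  rewrite -card_sig -[leqRHS]card_ord.
  apply: (@leq_card _ _ (fun x : {ij : 'I_k * 'I_k | ij.1 == ij.2} => (val x).1)).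
  move=> [[a b] /= ab] [[c d] /= cd] /= ac; apply: val_inj => /=.
  by move/eqP: ab cd => <- /eqP <-; rewrite ac.
have -> : #|[pred ij : 'I_k * 'I_k | ij.1 != ij.2]|
          = #|[predC [pred ij : 'I_k * 'I_k | ij.1 == ij.2]]| by apply: eq_card.
have : (3 * k <= k * k)%N by rewrite leq_mul2r k_ge3 orbT.
by move: diag_le; set D := #|_|; set C := #|_|; lia.
Qed.

Lemma npairs_gt0 : (0 < npairs)%N.
Proof. by apply: leq_trans npairs_ge; rewrite addn1. Qed.

Lemma tweight_Ek i j s t e : 0 <= s <= 1 -> 0 <= t <= 1 -> sep (Ek i s, Ek j t) != 0 ->
  tweight (Ek i s, Ek j t) e = tau (Ek i s, Ek j t) * (1 - tau (Ek i s, Ek j t))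
                               * ((pfst e == i) && (psnd e == j))%:R.
Proof.
move=> /andP [s0 s1] /andP [t0 t1] sep0.
rewrite (tau_mul_subr _ sep0) /tweight /= !bump_Ek.
case: (eqVneq (pfst e) i) => [e1|_]; last by rewrite /= !mulr0 sqrtr0 !mul0r.
case: (eqVneq (psnd e) j) => [e2|_]; last by rewrite /= !mulr0 sqrtr0 !mulr0 !mul0r.
have ij : i != j by rewrite -e1 -e2 pfst_neq_psnd.
have -> : spread (Ek i s, Ek j t) = 4 * (Num.sqrt (s * (1 - s)) * Num.sqrt (t * (1 - t)))
                                     / (1 + `|gap (Ek i s, Ek j t)|).
  by rewrite /spread apartness_Ek (negbTE ij) subr0 mulr1 sqrtrM ?mulr_ge0 ?subr_ge0.
move: sep0; rewrite /sep /= !mulr1; set u := `|gap _| => sep0.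
by field; rewrite sep0 oneD_norm_neq0.
Qed.

Lemma spread_apartness0 p : apartness p = 0 -> spread p = 0.
Proof. by rewrite /spread => ->; rewrite sqrtr0 mulr0 mul0r. Qed.

Lemma retraction_Ek {i j s t} : 0 <= s <= 1 -> 0 <= t <= 1 -> Ek i s <> Ek j t ->
  exists e, retraction (Ek i s, Ek j t) = Em e (tau (Ek i s, Ek j t)) /\
            (i != j -> pfst e = i /\ psnd e = j).
Proof.
move=> s01 t01 st; have sep0 := sep_neq0 st; set p := (Ek i s, Ek j t) in sep0 *.
suff [e [tweightE pair_e]] : exists e,
    (forall e', tweight p e' = tau p * (1 - tau p) * (e' == e)%:R) /\
    (i != j -> pfst e = i /\ psnd e = j).
  exists e; split=> //; rewrite /retraction /edge_pt /=.
  by congr (_, _, _); apply/rowP => e'; rewrite !mxE tweightE; ring.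
have [ij|ij] := eqVneq i j.
  exists (Ordinal npairs_gt0); split=> // e'.
  rewrite tweight_Ek // (tau_mul_subr _ sep0) spread_apartness0 ?mul0r //.
  by rewrite apartness_Ek ij eqxx subrr mulr0.
have [e [e1 e2]] := dpair_surj ij; exists e; split=> // e'.
suff <- : (pfst e' == i) && (psnd e' == j) = (e' == e) by rewrite tweight_Ek.
apply/andP/eqP => [[/eqP f1 /eqP f2]|->]; last by rewrite e1 e2 !eqxx.
by apply: dpair_inj; rewrite ?f1 ?f2 ?e1 ?e2.
Qed.

Lemma incl_Em e t : incl (Em e t) = (Ek (pfst e) t, Ek (psnd e) (1 - t)).
Proof.
rewrite /incl /edge_pt /=.
have sum_ind (d : 'I_npairs -> 'I_k) (c : R) i :
    \sum_e' ((d e' == i)%:R * (c * (e' == e)%:R)) = c * (i == d e)%:R.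
  by under eq_bigr do rewrite mulrA; rewrite sumr_indicator eq_sym mulrC.
congr ((_, _, _), (_, _, _)).
- by apply/rowP => i; rewrite !mxE; under eq_bigr do rewrite !mxE; rewrite sum_ind.
- by apply/rowP => i; rewrite !mxE; under eq_bigr do rewrite !mxE; rewrite sum_ind.
- by rewrite -/(seg t) seg_ord0.
- apply/rowP => i; rewrite !mxE; under eq_bigr do rewrite !mxE.
  by rewrite sum_ind; congr (_ * _); ring.
- by apply/rowP => i; rewrite !mxE; under eq_bigr do rewrite !mxE; rewrite sum_ind; ring.
Qed.

Lemma Ek_pfst_psnd_neq e t : Ek (pfst e) t <> Ek (psnd e) (1 - t).
Proof.
move=> /eq_Ek [tt [t_vertex|e12]]; last by move: (pfst_neq_psnd e); rewrite e12 eqxx.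
have t_half : t = 2^-1 by move: tt; lra.
by move: t_vertex; rewrite t_half; lra.
Qed.

(* This is what the factor [4 / (1 + `|gap p|)] in [spread] is for:
   4 t (1 - t) = 1 - (2 t - 1)^2 = (1 - `|gap|) (1 + `|gap|). *)
Lemma sep_incl e t : 0 <= t <= 1 -> sep (Ek (pfst e) t, Ek (psnd e) (1 - t)) = 1.
Proof.
move=> /andP [t0 t1]; have t_ge0 : 0 <= t * (1 - t) by rewrite mulr_ge0 ?subr_ge0.
rewrite /sep /spread apartness_Ek (negbTE (pfst_neq_psnd e)) subr0 mulr1.
have -> : (1 - t) * (1 - (1 - t)) = t * (1 - t) by ring.
rewrite -expr2 sqrtr_sqr (ger0_norm t_ge0).
apply: (mulIf (oneD_norm_neq0 (gap (Ek (pfst e) t, Ek (psnd e) (1 - t))))).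
set u := `|gap _|; have u2 : u ^+ 2 = (2 * t - 1) ^+ 2.
  by rewrite /u real_normK ?num_real // gap_Ek; congr (_ ^+ 2); ring.
transitivity (u ^+ 2 + u + 4 * (t * (1 - t))); first by field; exact: oneD_norm_neq0.
by rewrite u2; ring.
Qed.

Lemma tau_incl e t : 0 <= t <= 1 -> tau (Ek (pfst e) t, Ek (psnd e) (1 - t)) = t.
Proof. by move=> t01; rewrite /tau sep_incl // gap_Ek; field. Qed.

Lemma retraction_inclK q : realization R (banana npairs) q -> retraction (incl q) = q.
Proof.
move=> /(banana_realizationP _ _ npairs_gt0) [e [t [t01 ->]]]; rewrite incl_Em.
have [e' [-> pair_e']] := retraction_Ek t01 (itv01_onem t01) (@Ek_pfst_psnd_neq e t).
have [f1 f2] := pair_e' (pfst_neq_psnd e).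
by rewrite (dpair_inj f1 f2) tau_incl.
Qed.

(* For an interior point x of an edge, [edge_ind x] is the indicator of that
   edge; at a vertex it is junk, but there [along] is only used at l = 0 or
   l = 1, where the factor l * (1 - l) kills it (see [along_admissible]). *)
Definition edge_ind (x : Pt) (i : 'I_k) : R :=
  Num.min `|bump x i / (vpar x * (1 - vpar x))| 1.

Definition along (x : Pt) (l : R) : Pt :=
  (seg l, \row_i (l * (1 - l) * edge_ind x i),
          \row_i (l * (1 - l) * (1 - 2 * l) * edge_ind x i)).

Definition along_admissible (x : Pt) (l : R) : Prop :=
  vpar x * (1 - vpar x) != 0 \/ l * (1 - l) = 0.

Definition homotopy (lp : R * Pt2) : Pt2 :=
  (along lp.2.1 (lp.1 * vpar lp.2.1 + (1 - lp.1) * tau lp.2),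
   along lp.2.2 (lp.1 * vpar lp.2.2 + (1 - lp.1) * (1 - tau lp.2))).

Lemma edge_ind_le1 x i : `|edge_ind x i| <= 1.
Proof.
by rewrite /edge_ind ger0_norm ?ge_min ?lexx ?orbT // le_min normr_ge0 ler01.
Qed.

Lemma cvg_along {T : Type} (F : set_system T) {FF : Filter F}
    (x : T -> Pt) (l : T -> R) (x0 : Pt) (l0 : R) :
  x @ F --> x0 -> l @ F --> l0 -> along_admissible x0 l0 ->
  (fun y => along (x y) (l y)) @ F --> along x0 l0.
Proof.
move=> cx cl adm.
have cvpar : (fun y => vpar (x y)) @ F --> vpar x0.
  exact: (continuous_cvg _ (vpar_continuous _)).
have cbump i : (fun y => bump (x y) i) @ F --> bump x0 i.
  exact: (continuous_cvg _ (bump_continuous i _)).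
have cvg_scaled_ind (c : T -> R) c0 i : c @ F --> c0 ->
    (vpar x0 * (1 - vpar x0) != 0 \/ c0 = 0) ->
    (fun y => c y * edge_ind (x y) i) @ F --> c0 * edge_ind x0 i.
  move=> cc [interior|c00].
    apply: cvgM => //; apply: (continuous_cvg _ (min1_continuous _)).
    apply: cvg_norm; apply: cvgM; first exact: cbump.
    by apply: cvgV => //; apply: cvgM => //; apply: cvgB => //; exact: cvg_cst.
  rewrite c00 mul0r in cc *; apply: cvg0_mulr_bounded cc _ => y.
  exact: edge_ind_le1.
have cl1 : (fun y => l y * (1 - l y)) @ F --> l0 * (1 - l0).
  by apply: cvgM => //; apply: cvgB => //; exact: cvg_cst.
apply: (@cvg_pair _ _ _ _ (nbhs _) (nbhs _)).
  apply: (@cvg_pair _ _ _ _ (nbhs _) (nbhs _)); first exact: cvg_seg.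
  by apply: cvg_row => i; apply: cvg_scaled_ind.
apply: cvg_row => i; apply: cvg_scaled_ind.
  apply: cvgM => //; apply: cvgB; first exact: cvg_cst.
  by apply: cvgM => //; exact: cvg_cst.
by case: adm => [|->]; [left | right; rewrite !mul0r].
Qed.

Lemma along_Ek i s l : along_admissible (Ek i s) l -> along (Ek i s) l = Ek i l.
Proof.
have indE : s * (1 - s) != 0 -> edge_ind (Ek i s) =1 fun i' => (i' == i)%:R.
  move=> interior i'; rewrite /edge_ind vpar_Ek bump_Ek mulrAC mulfV // mul1r normr_nat.
  by case: (i' == i); rewrite /= ?min_l ?min_r ?ler01 ?lexx.
rewrite /along_admissible vpar_Ek /along /edge_pt /=.
case=> [/indE ind|->]; last by congr (_, _, _); apply/rowP => i'; rewrite !mxE !mul0r.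
by congr (_, _, _); apply/rowP => i'; rewrite !mxE ind.
Qed.

Lemma tau_vertex {i j s t} : 0 <= s <= 1 -> 0 <= t <= 1 -> Ek i s <> Ek j t ->
  (s * (1 - s) = 0 -> tau (Ek i s, Ek j t) = s) /\
  (t * (1 - t) = 0 -> 1 - tau (Ek i s, Ek j t) = t).
Proof.
move=> /andP [s0 s1] /andP [t0 t1] st.
have tauE : s * (1 - s) = 0 \/ t * (1 - t) = 0 ->
    s != t /\ tau (Ek i s, Ek j t) = if t < s then 1 else 0.
  move=> vertex; have spread0 : spread (Ek i s, Ek j t) = 0.
    apply: spread_apartness0; rewrite apartness_Ek.
    by case: vertex => ->; rewrite !(mul0r, mulr0).
  by have := tau_spread0 _ (sep_neq0 st) spread0; rewrite /= !vpar_Ek.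
split=> vertex.
- have [neq ->] := tauE (or_introl vertex).
  case: (vertex01 vertex) neq => -> neq; first by rewrite ltNge t0.
  by rewrite lt_neqAle eq_sym neq t1.
- have [neq ->] := tauE (or_intror vertex).
  case: (vertex01 vertex) neq => -> neq; last by rewrite ltNge s1 subr0.
  by rewrite lt_neqAle eq_sym neq s0 subrr.
Qed.

Lemma homotopy_admissible {i j s t} l : 0 <= s <= 1 -> 0 <= t <= 1 -> Ek i s <> Ek j t ->
  along_admissible (Ek i s) (l * s + (1 - l) * tau (Ek i s, Ek j t)) /\
  along_admissible (Ek j t) (l * t + (1 - l) * (1 - tau (Ek i s, Ek j t))).
Proof.
move=> s01 t01 st; have [tau_s tau_t] := tau_vertex s01 t01 st.
rewrite /along_admissible !vpar_Ek; split.
- have [vertex|] := eqVneq (s * (1 - s)) 0; last by left.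
  by right; rewrite tau_s // -mulrDl subrKC mul1r.
- have [vertex|] := eqVneq (t * (1 - t)) 0; last by left.
  by right; rewrite tau_t // -mulrDl subrKC mul1r.
Qed.

Lemma homotopyE i j s t l : 0 <= s <= 1 -> 0 <= t <= 1 -> Ek i s <> Ek j t ->
  homotopy (l, (Ek i s, Ek j t)) =
  (Ek i (l * s + (1 - l) * tau (Ek i s, Ek j t)),
   Ek j (l * t + (1 - l) * (1 - tau (Ek i s, Ek j t)))).
Proof.
move=> s01 t01 st; have [adm_s adm_t] := homotopy_admissible l s01 t01 st.
by rewrite /homotopy /= !vpar_Ek !along_Ek.
Qed.

Local Notation Conf := (Conf2 _ (realization R (banana k))).

Let k_gt0 : (0 < k)%N. Proof. exact: leq_trans k_ge3. Qed.

Lemma conf_Ek p : Conf p -> exists i j s t,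
  [/\ 0 <= s <= 1, 0 <= t <= 1, Ek i s <> Ek j t & p = (Ek i s, Ek j t)].
Proof.
case: p => x y [/= /(banana_realizationP _ _ k_gt0) [i [s [s01 ->]]]].
by move=> [/(banana_realizationP _ _ k_gt0) [j [t [t01 ->]]] st]; exists i, j, s, t.
Qed.

Lemma homotopy_param_gap p l : sep p != 0 ->
  (l * vpar p.1 + (1 - l) * tau p) - (l * vpar p.2 + (1 - l) * (1 - tau p))
  = gap p * (l + (1 - l) / sep p).
Proof. by move=> sep0; rewrite /tau /gap; field. Qed.

(* The two parameters stay apart at a rate proportional to their gap, so a
   collision can only happen if the points start at the same parameter on
   distinct edges; but then [tau] is 1/2 and they stay inside their edges. *)
Lemma homotopy_no_collision i j s t l : 0 <= s <= 1 -> 0 <= l <= 1 -> Ek i s <> Ek j t ->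
  Ek i (l * s + (1 - l) * tau (Ek i s, Ek j t))
  <> Ek j (l * t + (1 - l) * (1 - tau (Ek i s, Ek j t))).
Proof.
move=> /andP [s0 s1] l01 st /eq_Ek [eq_par vertex_or_eq].
have sep0 := sep_neq0 st; have sep_pos := sep_gt0 _ sep0.
have rate_pos : 0 < l + (1 - l) / sep (Ek i s, Ek j t).
  move: l01 => /andP [l0 l1].
  have [->|l_neq0] := eqVneq l 0; first by rewrite add0r subr0 mul1r invr_gt0.
  have l_pos : 0 < l by rewrite lt_neqAle eq_sym l_neq0.
  by rewrite ltr_pwDl // divr_ge0 ?subr_ge0 // ltW.
have := homotopy_param_gap _ l sep0; rewrite /= !vpar_Ek eq_par subrr gap_Ek.
move=> /esym /eqP; rewrite mulf_eq0 (gt_eqF rate_pos) orbF subr_eq0 => /eqP ts.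
subst t; have spread_neq0 : spread (Ek i s, Ek j s) != 0.
  by move: sep0; rewrite /sep gap_Ek subrr normr0 add0r.
have : apartness (Ek i s, Ek j s) != 0.
  by move: spread_neq0; apply: contraNneq => /spread_apartness0 ->.
rewrite apartness_Ek !mulf_eq0 !negb_or subr_eq0 => /andP [/and3P [_ s_neq0 s_neq1] ij].
have s_in : 0 < s < 1 by rewrite !lt_neqAle eq_sym s_neq0 eq_sym s_neq1 s0 s1.
have half_in : 0 < (2^-1 : R) < 1 by apply/andP; split; lra.
have /andP := convex_itvoo01 l01 s_in half_in.
move: vertex_or_eq; rewrite /tau gap_Ek subrr mul0r addr0.
case=> [/vertex01 [->|->]|ij_eq]; [lra | lra |].
by move: ij; rewrite ij_eq eqxx subrr eqxx.
Qed.

Lemma homotopy_conf l p : 0 <= l <= 1 -> Conf p -> Conf (homotopy (l, p)).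
Proof.
move=> l01 /conf_Ek [i [j [s [t [s01 t01 st ->]]]]].
have tau01 := tau_itv _ (sep_neq0 st).
rewrite homotopyE //; split; [|split].
- by apply: edge_pt_realization; exact: convex_itv01.
- by apply: edge_pt_realization; apply: convex_itv01 => //; exact: itv01_onem.
- exact: homotopy_no_collision.
Qed.

Lemma homotopy_continuous_at l p : Conf p -> {for (l, p), continuous homotopy}.
Proof.
move=> /conf_Ek [i [j [s [t [s01 t01 st ->]]]]].
have [adm_s adm_t] := homotopy_admissible l s01 t01 st.
set p0 := (Ek i s, Ek j t) in adm_s adm_t *.
have cl : (fun lp : R * Pt2 => lp.1) @ nbhs (l, p0) --> l by exact: cvg_fst.
have cp1 : (fun lp : R * Pt2 => lp.2.1) @ nbhs (l, p0) --> p0.1.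
  by apply: (continuous_cvg _ (@cvg_fst _ _ _ _ _)); exact: cvg_snd.
have cp2 : (fun lp : R * Pt2 => lp.2.2) @ nbhs (l, p0) --> p0.2.
  by apply: (continuous_cvg _ (@cvg_snd _ _ _ _ _)); exact: cvg_snd.
have ctau : (fun lp : R * Pt2 => tau lp.2) @ nbhs (l, p0) --> tau p0.
  by apply: (continuous_cvg _ (tau_continuous_at p0 (sep_neq0 st))); exact: cvg_snd.
have cvpar (f : R * Pt2 -> Pt) x : f @ nbhs (l, p0) --> x ->
    (fun lp => vpar (f lp)) @ nbhs (l, p0) --> vpar x.
  exact: (continuous_cvg _ (vpar_continuous _)).
apply: (@cvg_pair _ _ _ _ (nbhs _) (nbhs _)).
- apply: cvg_along; [exact: cp1 | | by rewrite /= vpar_Ek].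
  apply: cvgD; apply: cvgM => //; first exact: cvpar.
  by apply: cvgB => //; exact: cvg_cst.
- apply: cvg_along; [exact: cp2 | | by rewrite /= vpar_Ek].
  apply: cvgD; apply: cvgM => //; first exact: cvpar.
  1-2: by apply: cvgB => //; exact: cvg_cst.
Qed.

Lemma homotopy1 p : Conf p -> homotopy (1, p) = p.
Proof.
move=> /conf_Ek [i [j [s [t [s01 t01 st ->]]]]].
by rewrite homotopyE // subrr !mul0r !addr0 !mul1r.
Qed.

Lemma homotopy0 p : Conf p -> homotopy (0, p) = incl (retraction p).
Proof.
move=> /conf_Ek [i [j [s [t [s01 t01 st ->]]]]].
have [e [-> pair_e]] := retraction_Ek s01 t01 st.
rewrite homotopyE // incl_Em !mul0r !add0r subr0 !mul1r.
have [ij|/pair_e [-> ->] //] := eqVneq i j.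
have tau_end : tau (Ek i s, Ek j t) * (1 - tau (Ek i s, Ek j t)) = 0.
  rewrite (tau_mul_subr _ (sep_neq0 st)) spread_apartness0 ?mul0r //.
  by rewrite apartness_Ek ij eqxx subrr mulr0.
by congr pair; apply: Ek_vertex => //; rewrite mulrC opprB addrC subrK.
Qed.

Lemma retraction_continuous : {within Conf, continuous retraction}.
Proof.
apply: continuous_in_subspaceT => p /set_mem /conf_Ek [i [j [s [t [_ _ st ->]]]]].
exact/retraction_continuous_at/sep_neq0.
Qed.

Lemma retraction_graph p : Conf p -> realization R (banana npairs) (retraction p).
Proof.
move=> /conf_Ek [i [j [s [t [s01 t01 st ->]]]]].
have [e [-> _]] := retraction_Ek s01 t01 st.
exact/edge_pt_realization/tau_itv/sep_neq0.
Qed.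

Lemma incl_conf q : realization R (banana npairs) q -> Conf (incl q).
Proof.
move=> /(banana_realizationP _ _ npairs_gt0) [e [t [t01 ->]]]; rewrite incl_Em.
split; first exact: edge_pt_realization.
by split; [apply: edge_pt_realization; exact: itv01_onem | exact: Ek_pfst_psnd_neq].
Qed.

Lemma homotopic_incl_retraction : homotopic_on R _ _ Conf Conf (incl \o retraction) id.
Proof.
exists homotopy; split.
  apply: continuous_in_subspaceT => -[l p] /set_mem [_ /= conf_p].
  exact: homotopy_continuous_at.
split; first by move=> p conf_p; rewrite homotopy0 ?homotopy1.
by move=> l p l01 conf_p; apply: homotopy_conf => //; rewrite /= in_itv in l01.
Qed.

Lemma homotopic_retraction_incl : homotopic_on R _ _
  (realization R (banana npairs)) (realization R (banana npairs)) (retraction \o incl) id.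
Proof.
exists snd; split; first by apply: continuous_subspaceT => x; exact: cvg_snd.
by split=> // q graph_q; rewrite /= retraction_inclK.
Qed.

Lemma Conf2_banana_homotopy_equivalent :
  homotopy_equivalent R _ _ Conf (realization R (banana npairs)).
Proof.
exists retraction, incl; split; first exact: retraction_continuous.
split; first by apply: continuous_subspaceT; exact: incl_continuous.
split; first exact: retraction_graph.
split; first exact: incl_conf.
by split; [exact: homotopic_incl_retraction | exact: homotopic_retraction_incl].
Qed.

End BananaConfigurations.

Theorem mainTheorem5 (R : realType) (k : nat) (hk : (3 <= k)%N) :
  exists G : multigraph,
    gconnected G /\ (k - 1 <= betti1 G)%N /\
    homotopy_equivalent R _ _ (Conf2 _ (realization R (banana k)))
                          (realization R G).
Proof.
exists (banana (npairs k)); split; first exact/banana_connected/npairs_gt0.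
split; last exact: Conf2_banana_homotopy_equivalent.
by apply: leq_trans (betti1_banana_ge _); have := npairs_ge _ hk; lia.
Qed.
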